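(* For every $d\ge1$ the function $g_d\colon[1,\infty)\to[1,\infty)$ satisfies: (i) $g_d$ is uniformly continuous, strictly increasing and convex; (ii) $g_d(1)=1$ and $\lim_{t\to\infty}g_d(t)=\infty$; (iii) $g_d$ is differentiable on $(1,\infty)$ with $g_d'(t)=\frac{\Gamma(\frac d2+1)}{\sqrt{\pi}\,\Gamma(\frac{d+1}{2})}\,\frac1d\,\bigl(1-\frac1{t^2}\bigr)^{(d-1)/2}$ for $t>1$; (iv) $g_d(t)-1=\mathcal O\bigl((t-1)^{(d+1)/2}\bigr)$ as $t\to1^+$; (v) $g_d$ has an inverse $g_d^{-1}\colon[1,\infty)\to[1,\infty)$ whose minimal modulus of continuity $w(h)=\sup_{s,t\ge1,\,|s-t|<h}|g_d^{-1}(s)-g_d^{-1}(t)|$ equals $g_d^{-1}(1+h)-1$ for all $h\ge0$; (vi) $w(h)=\mathcal O\bigl(h^{2/(d+1)}\bigr)$ as $h\to0^+$; (vii) $g_d^{-1}(t)=\mathcal O(t)$ as $t\to\infty$.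
   Context: For $d\ge1$ and $t\ge1$ define \[g_d(t)=1+\frac{\Gamma(\frac d2+1)}{\sqrt{\pi}\,\Gamma(\frac{d+1}{2})}\left(\frac{t}{d}\Bigl(1-\frac1{t^2}\Bigr)^{\frac{d+1}{2}}-\int_0^{\arccos(1/t)}\sin^d(s)\,\mathrm{d}s\right).\] Equivalently, for any ellipsoid $E=\{x\colon (x-\mu)^\top\Sigma^{-1}(x-\mu)\le1\}$ with $\Sigma$ symmetric positive definite, and $x\notin E$, $g_d(d_\Sigma(x,\mu))=\mathrm{vol}_d(\mathrm{conv}(E\cup\{x\}))/\mathrm{vol}_d(E)$, where $d_\Sigma(x,\mu)=\sqrt{(x-\mu)^\top\Sigma^{-1}(x-\mu)}$. *)

From Stdlib Require Import Reals Lra Classical ClassicalEpsilon.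
Open Scope R_scope.

(* Gamma function at half-integers: gamma_half n = Gamma(n/2) for n >= 1,
   determined by Gamma(1/2) = sqrt PI, Gamma(1) = 1, Gamma(x+1) = x Gamma(x).
   (gamma_half 0 is a junk value, never used.) *)
Fixpoint gamma_half (n : nat) : R :=
  match n with
  | O => 0
  | S O => sqrt PI
  | S (S O) => 1
  | S (S m) => INR m / 2 * gamma_half m
  end.

(* Total Riemann integral: RiemannInt if f is Riemann integrable on [a,b], else 0
   (the value of RiemannInt does not depend on the integrability proof). *)
Definition Rint (f : R -> R) (a b : R) : R :=
  match excluded_middle_informative (inhabited (Riemann_integrable f a b)) with
  | left H => RiemannInt (epsilon H (fun _ => True))
  | right _ => 0
  end.

(* c_d = Gamma(d/2+1) / (sqrt(pi) Gamma((d+1)/2)) *)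
Definition cst (d : nat) : R :=
  gamma_half (d + 2) / (sqrt PI * gamma_half (d + 1)).

(* x^y for x >= 0, y > 0, with the convention 0^y = 0
   (Stdlib's Rpower 0 y is exp(y * ln 0) = 1, a junk value). *)
Definition rpow (x y : R) : R :=
  if Rlt_dec 0 x then Rpower x y else 0.

Definition g (d : nat) (t : R) : R :=
  1 + cst d * (t / INR d * rpow (1 - 1 / t ^ 2) ((INR d + 1) / 2)
               - Rint (fun s => sin s ^ d) 0 (acos (1 / t))).

(* The set whose supremum is the minimal modulus of continuity w(h) of f on [1,oo):
   all |f s - f t| with s,t >= 1, |s - t| < h, together with 0 (convention sup {} = 0). *)
Definition modc_set (f : R -> R) (h : R) (x : R) : Prop :=
  x = 0 \/ exists s t, 1 <= s /\ 1 <= t /\ Rabs (s - t) < h /\ x = Rabs (f s - f t).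

From Stdlib Require Import Reals Lra Lia ClassicalEpsilon.
From Coquelicot Require Import Coquelicot.
Open Scope R_scope.

(* For d = k + 1 the derivative of g_d on (1,oo) is
   g_d'(t) = (c_d / d) (1 - 1/t^2)^(k/2), which is nonnegative, nondecreasing,
   bounded by c_d / d and positive for t > 1.  Almost every claim depends only
   on this shape of the derivative, so the file has two parts. *)

Record monotone_slope (f f' : R -> R) : Prop := {
  ms_one : f 1 = 1;
  ms_cont : forall t, 1 <= t -> continuity_pt f t;
  ms_deriv : forall t, 1 < t -> is_derive f t (f' t);
  ms_mono : forall a b, 1 <= a <= b -> f' a <= f' b;
  ms_nonneg : 0 <= f' 1;
  ms_pos : forall t, 1 < t -> 0 < f' t
}.

(* The inverse of f on [1,oo), chosen by the axiom of choice (junk value 1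
   outside the range of f restricted to [1,oo)). *)
Definition inverse_from_one (f : R -> R) (y : R) : R :=
  epsilon (inhabits 1) (fun x => 1 <= x /\ f x = y).

Section MonotoneSlope.

Context {f f' : R -> R} (Hf : monotone_slope f f').

Lemma slope_nonneg t : 1 <= t -> 0 <= f' t.
Proof. intros Ht. pose proof (ms_mono _ _ Hf 1 t ltac:(lra)). pose proof (ms_nonneg _ _ Hf). lra. Qed.

Lemma increment_bounds a b : 1 <= a <= b ->
  f' a * (b - a) <= f b - f a <= f' b * (b - a).
Proof.
  intros Hab. destruct (Req_dec a b) as [<-|Hne].
  { replace (a - a) with 0 by ring. lra. }
  destruct (MVT_gen f a b f') as [c [Hc Hinc]].
  - rewrite Rmin_left, Rmax_right by lra. intros x Hx. apply (ms_deriv _ _ Hf). lra.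
  - rewrite Rmin_left, Rmax_right by lra. intros x Hx. apply (ms_cont _ _ Hf). lra.
  - rewrite Rmin_left, Rmax_right in Hc by lra. rewrite Hinc.
    pose proof (ms_mono _ _ Hf a c ltac:(lra)). pose proof (ms_mono _ _ Hf c b ltac:(lra)).
    split; apply Rmult_le_compat_r; lra.
Qed.

Lemma strictly_increasing a b : 1 <= a < b -> f a < f b.
Proof.
  intros Hab. set (m := (a + b) / 2).
  destruct (increment_bounds a m) as [Hleft _]; [unfold m; lra|].
  destruct (increment_bounds m b) as [Hright _]; [unfold m; lra|].
  pose proof (slope_nonneg a ltac:(lra)). pose proof (ms_pos _ _ Hf m ltac:(unfold m; lra)).
  assert (0 < f' m * (b - m)) by (apply Rmult_lt_0_compat; unfold m in *; lra).
  assert (0 <= f' a * (m - a)) by (apply Rmult_le_pos; unfold m in *; lra).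
  lra.
Qed.

Lemma increasing a b : 1 <= a <= b -> f a <= f b.
Proof.
  intros Hab. destruct (Req_dec a b) as [<-|]; [lra|].
  left. apply strictly_increasing. lra.
Qed.

Lemma at_least_one t : 1 <= t -> 1 <= f t.
Proof. intros Ht. rewrite <- (ms_one _ _ Hf). apply increasing. lra. Qed.

Lemma lipschitz L : (forall t, 1 <= t -> f' t <= L) ->
  forall s t, 1 <= s -> 1 <= t -> Rabs (f s - f t) <= L * Rabs (s - t).
Proof.
  intros HL s t Hs Ht. destruct (Rle_or_lt s t).
  - destruct (increment_bounds s t) as [_ Hup]; [lra|].
    pose proof (HL t Ht). pose proof (increasing s t ltac:(lra)).
    rewrite !Rabs_left1 by lra. nra.
  - destruct (increment_bounds t s) as [_ Hup]; [lra|].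
    pose proof (HL s Hs). pose proof (increasing t s ltac:(lra)).
    rewrite !Rabs_right by lra. nra.
Qed.

Lemma uniformly_continuous L : (forall t, 1 <= t -> f' t <= L) ->
  forall eps, 0 < eps -> exists delta, 0 < delta /\
    forall s t, 1 <= s -> 1 <= t -> Rabs (s - t) < delta -> Rabs (f s - f t) < eps.
Proof.
  intros HL eps Heps.
  assert (HL0 : 0 <= L) by (pose proof (slope_nonneg 1 ltac:(lra)); pose proof (HL 1 ltac:(lra)); lra).
  exists (eps / (L + 1)). split; [apply Rdiv_lt_0_compat; lra|].
  intros s t Hs Ht Hst.
  apply Rle_lt_trans with (L * Rabs (s - t)); [apply lipschitz; auto|].
  apply Rle_lt_trans with (L * (eps / (L + 1))); [apply Rmult_le_compat_l; lra|].
  apply Rmult_lt_reg_r with (L + 1); [lra|]. field_simplify; lra.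
Qed.

(* Convexity: the slope on the left of an interior point is at most the slope
   on its right. *)
Lemma convex s t l : 1 <= s -> 1 <= t -> 0 <= l <= 1 ->
  f (l * s + (1 - l) * t) <= l * f s + (1 - l) * f t.
Proof.
  intros Hs Ht Hl. set (m := l * s + (1 - l) * t).
  destruct (Rle_or_lt s t).
  - assert (s <= m <= t) by (unfold m; nra).
    destruct (increment_bounds s m) as [_ Hleft]; [lra|].
    destruct (increment_bounds m t) as [Hright _]; [lra|].
    assert (Hbal : l * (f' m * (m - s)) = (1 - l) * (f' m * (t - m))) by (unfold m; ring).
    assert (l * (f m - f s) <= l * (f' m * (m - s))) by (apply Rmult_le_compat_l; lra).
    assert ((1 - l) * (f' m * (t - m)) <= (1 - l) * (f t - f m)) by (apply Rmult_le_compat_l; lra).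
    lra.
  - assert (t <= m <= s) by (unfold m; nra).
    destruct (increment_bounds t m) as [_ Hleft]; [lra|].
    destruct (increment_bounds m s) as [Hright _]; [lra|].
    assert (Hbal : (1 - l) * (f' m * (m - t)) = l * (f' m * (s - m))) by (unfold m; ring).
    assert ((1 - l) * (f m - f t) <= (1 - l) * (f' m * (m - t))) by (apply Rmult_le_compat_l; lra).
    assert (l * (f' m * (s - m)) <= l * (f s - f m)) by (apply Rmult_le_compat_l; lra).
    lra.
Qed.

Lemma linear_growth t : 2 <= t -> 1 + f' 2 * (t - 2) <= f t.
Proof.
  intros Ht. destruct (increment_bounds 2 t) as [Hinc _]; [lra|].
  pose proof (at_least_one 2 ltac:(lra)). lra.
Qed.

Lemma unbounded M : exists T, 2 <= T /\ forall t, T <= t -> M < f t.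
Proof.
  pose proof (ms_pos _ _ Hf 2 ltac:(lra)) as Hslope.
  assert (HM : 0 <= Rabs M / f' 2) by (apply Rdiv_le_0_compat; [apply Rabs_pos | lra]).
  exists (3 + Rabs M / f' 2). split; [lra|]. intros t Ht.
  pose proof (linear_growth t ltac:(lra)) as Hgrow.
  assert (f' 2 * (1 + Rabs M / f' 2) <= f' 2 * (t - 2)) by (apply Rmult_le_compat_l; lra).
  replace (f' 2 * (1 + Rabs M / f' 2)) with (f' 2 + Rabs M) in H by (field; lra).
  pose proof (Rle_abs M). lra.
Qed.

Lemma onto y : 1 <= y -> exists x, 1 <= x /\ f x = y.
Proof.
  intros Hy. destruct (Req_dec y 1) as [->|Hne].
  { exists 1. split; [lra | apply (ms_one _ _ Hf)]. }
  destruct (unbounded y) as [T [HT HfT]].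
  destruct (Ranalysis5.IVT_interv (fun t => f t - y) 1 T) as [x [Hx Hroot]].
  - intros a Ha. apply continuity_pt_minus; [apply (ms_cont _ _ Hf); lra | apply continuity_pt_const].
    intros ? ?; reflexivity.
  - lra.
  - rewrite (ms_one _ _ Hf). lra.
  - pose proof (HfT T ltac:(lra)). lra.
  - exists x. split; lra.
Qed.

(* Superadditivity of f - 1, a consequence of convexity: shifting an
   increment of length h to the right can only increase it. *)
Lemma increment_shift a h : 1 <= a -> 0 <= h -> f (1 + h) - f 1 <= f (a + h) - f a.
Proof.
  intros Ha Hh. destruct (Req_dec h 0) as [->|Hh0].
  { replace (a + 0) with a by ring. replace (1 + 0) with 1 by ring. lra. }
  set (lam := h / (a - 1 + h)).
  assert (Hlam : 0 <= lam <= 1).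
  { unfold lam. split; [apply Rdiv_le_0_compat; lra|].
    apply Rmult_le_reg_r with (a - 1 + h); [lra|]. field_simplify; lra. }
  pose proof (convex 1 (a + h) lam ltac:(lra) ltac:(lra) Hlam) as Hconv1.
  pose proof (convex (a + h) 1 lam ltac:(lra) ltac:(lra) Hlam) as Hconv2.
  replace (lam * 1 + (1 - lam) * (a + h)) with a in Hconv1 by (unfold lam; field; lra).
  replace (lam * (a + h) + (1 - lam) * 1) with (1 + h) in Hconv2 by (unfold lam; field; lra).
  lra.
Qed.

(* The inverse of f: a right inverse by surjectivity, a left inverse by
   strict monotonicity. *)
Let finv := inverse_from_one f.

Lemma inverse_spec y : 1 <= y -> 1 <= finv y /\ f (finv y) = y.
Proof. intros Hy. unfold finv, inverse_from_one. apply epsilon_spec. apply onto; auto. Qed.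

Lemma inverse_left t : 1 <= t -> finv (f t) = t.
Proof.
  intros Ht. destruct (inverse_spec (f t) (at_least_one t Ht)) as [Hx Hfx].
  destruct (Rtotal_order (finv (f t)) t) as [Hlt|[Heq|Hgt]]; auto.
  - pose proof (strictly_increasing _ _ (conj Hx Hlt)). lra.
  - pose proof (strictly_increasing t _ (conj Ht Hgt)). lra.
Qed.

(* Increments of the inverse over intervals of length < h are at most the
   increment over [1, 1+h]: the inverse is concave. *)
Lemma inverse_increment h s t : 0 <= h -> 1 <= t <= s -> s - t < h ->
  0 <= finv s - finv t <= finv (1 + h) - 1.
Proof.
  intros Hh Hts Hst.
  destruct (inverse_spec s ltac:(lra)) as [Hb1 Hb2].
  destruct (inverse_spec t ltac:(lra)) as [Ha1 Ha2].
  destruct (inverse_spec (1 + h) ltac:(lra)) as [HX1 HX2].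
  set (a := finv t) in *. set (b := finv s) in *. set (X := finv (1 + h)) in *.
  split.
  - destruct (Rle_or_lt a b); [lra|]. pose proof (strictly_increasing b a ltac:(lra)). lra.
  - destruct (Rle_or_lt (b - a) (X - 1)); auto. exfalso.
    pose proof (strictly_increasing (a + (X - 1)) b ltac:(lra)).
    pose proof (increment_shift a (X - 1) Ha1 ltac:(lra)).
    replace (1 + (X - 1)) with X in * by ring. rewrite (ms_one _ _ Hf) in *. lra.
Qed.

Lemma inverse_modulus h : 0 <= h -> is_lub (modc_set finv h) (finv (1 + h) - 1).
Proof.
  intros Hh. destruct (inverse_spec (1 + h) ltac:(lra)) as [HX1 HX2]. split.
  - intros x [->|[s [t [Hs [Ht [Hst ->]]]]]]; [lra|].
    destruct (Rle_or_lt t s).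
    + rewrite Rabs_right in Hst by lra. pose proof (inverse_increment h s t Hh ltac:(lra) Hst).
      rewrite Rabs_right; lra.
    + rewrite Rabs_left in Hst by lra. pose proof (inverse_increment h t s Hh ltac:(lra) ltac:(lra)).
      rewrite Rabs_left1; lra.
  - intros B HB. destruct (Rle_or_lt (finv (1 + h) - 1) B); auto. exfalso.
    set (X := finv (1 + h)) in *.
    assert (0 <= B) by (apply HB; left; reflexivity).
    (* a point y in [1, X) with y - 1 > B is attained as finv (f y) - finv 1 *)
    set (y := (Rmax 1 (B + 1) + X) / 2).
    assert (Hm1 : 1 <= Rmax 1 (B + 1)) by apply Rmax_l.
    assert (Hm2 : B + 1 <= Rmax 1 (B + 1)) by apply Rmax_r.
    assert (Hm3 : Rmax 1 (B + 1) < X) by (apply Rmax_lub_lt; lra).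
    assert (1 <= y < X) by (unfold y; lra).
    pose proof (strictly_increasing y X ltac:(lra)). pose proof (at_least_one y ltac:(lra)).
    assert (Hel : modc_set finv h (Rabs (finv (f y) - finv (f 1)))).
    { right. exists (f y), (f 1). rewrite (ms_one _ _ Hf). repeat split; try lra.
      rewrite Rabs_right; lra. }
    apply HB in Hel. rewrite !inverse_left in Hel by lra. rewrite Rabs_right in Hel by lra.
    unfold y in Hel. lra.
Qed.

(* Linear growth of f gives at most linear growth of its inverse. *)
Lemma inverse_linear : exists C T, forall t, T <= t -> Rabs (finv t) <= C * t.
Proof.
  pose proof (ms_pos _ _ Hf 2 ltac:(lra)) as Hslope.
  assert (Hinv : 0 < / f' 2) by (apply Rinv_0_lt_compat; auto).
  exists (2 + / f' 2), 1. intros t Ht.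
  destruct (inverse_spec t Ht) as [Hx Hfx]. set (x := finv t) in *.
  rewrite Rabs_right by lra.
  destruct (Rle_or_lt x 2); [nra|].
  pose proof (linear_growth x ltac:(lra)) as Hgrow. rewrite Hfx in Hgrow.
  assert (x - 2 <= (t - 1) / f' 2).
  { apply Rmult_le_reg_r with (f' 2); auto. field_simplify; lra. }
  unfold Rdiv in H0. nra.
Qed.

Lemma inverse_holder c p : 0 < c -> 0 < p ->
  (forall t, 1 < t <= 2 -> c * Rpower (t - 1) p <= f t - 1) ->
  exists C delta, 0 < delta /\
    forall h w, 0 < h < delta -> is_lub (modc_set finv h) w ->
      Rabs w <= C * Rpower h (/ p).
Proof.
  intros Hc Hp Hlow.
  exists (/ Rpower c (/ p)), (f 2 - 1). split.
  { pose proof (strictly_increasing 1 2 ltac:(lra)). rewrite (ms_one _ _ Hf) in *. lra. }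
  intros h w Hh Hw.
  rewrite (is_lub_u _ _ _ Hw (inverse_modulus h ltac:(lra))).
  destruct (inverse_spec (1 + h) ltac:(lra)) as [HX1 HX2]. set (X := finv (1 + h)) in *.
  assert (HX2' : X < 2).
  { destruct (Rlt_or_le X 2); auto. pose proof (increasing 2 X ltac:(lra)). lra. }
  assert (HX1' : 1 < X).
  { destruct (Req_dec X 1) as [E|]; [|lra]. rewrite E, (ms_one _ _ Hf) in HX2. lra. }
  pose proof (Hlow X ltac:(lra)) as HcX. rewrite HX2 in HcX.
  assert (Hpow : 0 < Rpower (X - 1) p) by apply exp_pos.
  pose proof (Rle_Rpower_l _ _ (/ p) ltac:(left; apply Rinv_0_lt_compat; lra)
                (conj (Rmult_lt_0_compat _ _ Hc Hpow) HcX)) as Hroot.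
  rewrite <- Rpower_mult_distr, Rpower_mult, Rinv_r, Rpower_1 in Hroot by (auto || lra).
  assert (Hcp : 0 < Rpower c (/ p)) by apply exp_pos.
  rewrite Rabs_right by lra.
  replace (1 + h - 1) with h in Hroot by ring.
  apply Rmult_le_reg_l with (Rpower c (/ p)); auto.
  rewrite <- Rmult_assoc, Rinv_r, Rmult_1_l by lra. lra.
Qed.

End MonotoneSlope.

Lemma sin_pow_continuous (d : nat) x : continuity_pt (fun s => sin s ^ d) x.
Proof. apply derivable_continuous_pt. reg. Qed.

Lemma Rint_sin_pow d x : Rint (fun s => sin s ^ d) 0 x = RInt (fun s => sin s ^ d) 0 x.
Proof.
  unfold Rint. destruct excluded_middle_informative as [H|H].
  - rewrite (RInt_Reals _ _ _ (epsilon H (fun _ => True))). reflexivity.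
  - exfalso. apply H. destruct (Rle_or_lt 0 x); constructor.
    + apply continuity_implies_RiemannInt; auto. intros; apply sin_pow_continuous.
    + apply RiemannInt_P1, continuity_implies_RiemannInt; [lra|].
      intros; apply sin_pow_continuous.
Qed.

Lemma Rpower_half x k : 0 < x -> Rpower x (INR k / 2) = sqrt x ^ k.
Proof.
  intros Hx. replace (INR k / 2) with (/ 2 * INR k) by field.
  rewrite <- Rpower_mult, Rpower_sqrt by auto. apply Rpower_pow. apply sqrt_lt_R0; auto.
Qed.

Lemma Rpower_half_succ x k : 0 < x ->
  Rpower x ((INR (S k) + 1) / 2) = sqrt x ^ S (S k).
Proof. intros Hx. rewrite <- S_INR. apply Rpower_half; auto. Qed.

Lemma sqrt_one_minus_inv_sq t : 0 < t -> sqrt (1 - 1 / t ^ 2) = sqrt (t ^ 2 - 1) / t.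
Proof.
  intros Ht. destruct (Rle_or_lt (t ^ 2 - 1) 0).
  - assert (1 <= 1 / t ^ 2).
    { apply Rmult_le_reg_r with (t ^ 2); [nra|]. field_simplify; nra. }
    rewrite !sqrt_neg_0 by lra. lra.
  - replace (sqrt (t ^ 2 - 1) / t) with (sqrt (t ^ 2 - 1) / sqrt (t ^ 2))
      by (rewrite sqrt_pow2; lra).
    rewrite <- sqrt_div_alt by nra. f_equal. field. lra.
Qed.

Lemma acos_inv t : 0 < t -> acos (1 / t) = atan (sqrt (t ^ 2 - 1)).
Proof.
  intros Ht. rewrite acos_atan by (apply Rdiv_lt_0_compat; lra).
  f_equal. unfold Rsqr. replace (1 / t * (1 / t)) with (1 / t ^ 2) by (field; lra).
  rewrite sqrt_one_minus_inv_sq by auto. field. lra.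
Qed.

(* g_d rewritten with an integer power instead of rpow and with acos (1/t)
   expressed through atan: a form that auto_derive can differentiate on (1,oo). *)
Definition G (d : nat) (t : R) : R :=
  1 + cst d * (t / INR d * (sqrt (t ^ 2 - 1) / t) ^ S d
               - RInt (fun s => sin s ^ d) 0 (atan (sqrt (t ^ 2 - 1)))).

Lemma g_eq_G d t : 0 < t -> g d t = G d t.
Proof.
  intros Ht. unfold g, G. rewrite Rint_sin_pow, acos_inv by auto.
  rewrite <- sqrt_one_minus_inv_sq by auto. unfold rpow. rewrite <- S_INR.
  destruct Rlt_dec as [Hpos|Hneg].
  - rewrite Rpower_half by auto. reflexivity.
  - rewrite (sqrt_neg_0 (1 - 1 / t ^ 2)) by lra. simpl. ring.
Qed.

Lemma G_one d : G d 1 = 1.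
Proof.
  unfold G. replace (1 ^ 2 - 1) with 0 by ring. rewrite sqrt_0, atan_0, RInt_point.
  replace ((0 / 1) ^ S d) with 0 by (simpl; field). unfold zero; simpl. ring.
Qed.

Lemma sqrt_sq_minus_one_continuous t : 1 <= t -> continuous (fun t => sqrt (t ^ 2 - 1)) t.
Proof.
  intros Ht. apply continuity_pt_filterlim.
  apply (continuity_pt_comp (fun t => t ^ 2 - 1) sqrt); [reg|]. apply continuity_pt_sqrt. nra.
Qed.

Lemma G_continuous d t : 1 <= t -> continuity_pt (G d) t.
Proof.
  intros Ht. apply continuity_pt_filterlim. change (continuous (G d) t). unfold G.
  apply (continuous_plus (fun _ => 1)); [apply continuous_const|].
  apply (continuous_mult (K := R_AbsRing) (fun _ => cst d)); [apply continuous_const|].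
  apply (continuous_minus (V := R_NormedModule)).
  - apply (continuous_mult (K := R_AbsRing)); [apply continuity_pt_filterlim; reg|].
    apply (continuous_comp _ (fun x => x ^ S d)).
    + apply (continuous_mult (K := R_AbsRing)); [apply sqrt_sq_minus_one_continuous; auto|].
      apply continuity_pt_filterlim. apply continuity_pt_inv; [reg | lra].
    + apply continuity_pt_filterlim. reg.
  - apply (continuous_comp _ (fun y => RInt (fun s => sin s ^ d) 0 y)).
    + apply (continuous_comp _ atan); [apply sqrt_sq_minus_one_continuous; auto|].
      apply continuity_pt_filterlim, derivable_continuous_pt.
      exists (/ (1 + sqrt (t ^ 2 - 1) ^ 2)). apply derivable_pt_lim_atan.
    + apply (continuous_RInt_1 (V := R_NormedModule) (fun s => sin s ^ d) 0 _
               (fun y => RInt (fun s => sin s ^ d) 0 y)).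
      exists (mkposreal 1 Rlt_0_1). intros. apply (RInt_correct (V := R_CompleteNormedModule)).
      apply (ex_RInt_continuous (V := R_CompleteNormedModule)). intros.
      apply continuity_pt_filterlim, sin_pow_continuous.
Qed.

Definition slope (k : nat) (t : R) : R :=
  cst (S k) / INR (S k) * sqrt (1 - 1 / t ^ 2) ^ k.

Lemma G_derivative k t : 1 < t -> is_derive (G (S k)) t (slope k t).
Proof.
  intros Ht. unfold slope, G. rewrite sqrt_one_minus_inv_sq by lra.
  set (c := cst (S k)). set (D := INR (S k)).
  assert (HD : 0 < D) by (apply lt_0_INR; lia).
  auto_derive.
  - repeat split; try nra.
    + apply (ex_RInt_continuous (V := R_CompleteNormedModule)). intros.
      apply continuity_pt_filterlim, (sin_pow_continuous (S k)).
    + exists (mkposreal 1 Rlt_0_1). intros. apply (sin_pow_continuous (S k)).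
  - change (match k with 0%nat => 1 | S _ => INR k + 1 end) with D.
    replace (t * (t * 1) + - (1)) with (t ^ 2 - 1) by ring.
    assert (Hr0 : 0 < sqrt (t ^ 2 - 1)) by (apply sqrt_lt_R0; nra).
    assert (Hr2 : sqrt (t ^ 2 - 1) * sqrt (t ^ 2 - 1) = t ^ 2 - 1) by (apply sqrt_sqrt; nra).
    set (r := sqrt (t ^ 2 - 1)) in *.
    (* derivative of r / t, of atan r, and the value sin (atan r) = r / t *)
    assert (Hquot : 1 * ((1 + 1) * (t * 1)) * / (2 * r) * / t + r * (- (1) * / (t * t))
                    = / (r * t * t)) by (field_simplify_eq; [nra | split; lra]).
    assert (Hatan : / (1 + r * (r * 1)) = / (t * t)) by (f_equal; nra).
    assert (Hsin : sin (atan r) = r * / t).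
    { rewrite sin_atan. replace (1 + r²) with (t ^ 2) by (unfold Rsqr; nra).
      rewrite sqrt_pow2 by lra. reflexivity. }
    rewrite Hquot, Hatan, Hsin. replace (r / t) with (r * / t) by reflexivity.
    set (Q := (r * / t) ^ k).
    apply Rminus_diag_uniq.
    replace (c * (1 * / D * (r * / t * (r * / t * Q)) +
      t * / D * (/ (r * t * t) * ((D + 1) * (r * / t * Q))) +
      - (1 * ((1 + 1) * (t * 1)) * / (2 * r) * / (t * t) * (r * / t * Q))) - c / D * Q)
      with (c * Q / (D * t * t) * (r * r - (t ^ 2 - 1))) by (field; lra).
    rewrite Hr2. ring.
Qed.

Lemma gamma_half_pos n : 0 < gamma_half (S n) /\ 0 < gamma_half (S (S n)).
Proof.
  induction n as [|n IH].
  - split; simpl; [apply sqrt_lt_R0, PI_RGT_0 | lra].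
  - split; [apply IH|].
    change (gamma_half (S (S (S n)))) with (INR (S n) / 2 * gamma_half (S n)).
    apply Rmult_lt_0_compat; [|apply IH].
    apply Rdiv_lt_0_compat; [apply lt_0_INR; lia | lra].
Qed.

Lemma cst_pos d : 0 < cst d.
Proof.
  unfold cst. replace (d + 2)%nat with (S (S d)) by lia. replace (d + 1)%nat with (S d) by lia.
  destruct (gamma_half_pos d).
  apply Rdiv_lt_0_compat; auto. apply Rmult_lt_0_compat; auto. apply sqrt_lt_R0, PI_RGT_0.
Qed.

(* The limiting slope c_d / d of g_d at infinity. *)
Lemma max_slope_pos k : 0 < cst (S k) / INR (S k).
Proof. apply Rdiv_lt_0_compat; [apply cst_pos | apply lt_0_INR; lia]. Qed.

Lemma inv_sq_lt_one t : 1 < t -> 1 / t ^ 2 < 1.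
Proof. intros Ht. apply Rmult_lt_reg_r with (t ^ 2); [nra|]. field_simplify; nra. Qed.

Lemma slope_mono k a b : 1 <= a <= b -> slope k a <= slope k b.
Proof.
  intros Hab. unfold slope. apply Rmult_le_compat_l; [left; apply max_slope_pos|].
  apply pow_incr. split; [apply sqrt_pos|]. apply sqrt_le_1_alt.
  assert (1 / b ^ 2 <= 1 / a ^ 2).
  { unfold Rdiv. rewrite !Rmult_1_l. apply Rinv_le_contravar; nra. }
  lra.
Qed.

Lemma slope_nonneg_at_one k : 0 <= slope k 1.
Proof. unfold slope. apply Rmult_le_pos; [left; apply max_slope_pos | apply pow_le, sqrt_pos]. Qed.

Lemma slope_pos k t : 1 < t -> 0 < slope k t.
Proof.
  intros Ht. unfold slope. apply Rmult_lt_0_compat; [apply max_slope_pos|].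
  apply pow_lt, sqrt_lt_R0. pose proof (inv_sq_lt_one t Ht). lra.
Qed.

Lemma slope_le_max k t : 1 <= t -> slope k t <= cst (S k) / INR (S k).
Proof.
  intros Ht. unfold slope. rewrite <- (Rmult_1_r (cst (S k) / INR (S k))) at 2.
  apply Rmult_le_compat_l; [left; apply max_slope_pos|].
  apply Rle_trans with (1 ^ k); [|rewrite pow1; lra]. apply pow_incr. split; [apply sqrt_pos|].
  apply Rle_trans with (sqrt 1); [apply sqrt_le_1_alt | rewrite sqrt_1; lra].
  assert (0 < 1 / t ^ 2) by (apply Rdiv_lt_0_compat; nra). lra.
Qed.

Lemma G_monotone_slope k : monotone_slope (G (S k)) (slope k).
Proof.
  split.
  - apply G_one.
  - apply G_continuous.
  - apply G_derivative.
  - apply slope_mono.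
  - apply slope_nonneg_at_one.
  - apply slope_pos.
Qed.

(* Near 1, the quantity 1 - 1/t^2 = (t-1)(t+1)/t^2 is comparable to t - 1. *)
Lemma one_minus_inv_sq_near_one t : 1 <= t <= 3 / 2 ->
  t - 1 <= 1 - 1 / t ^ 2 <= 2 * (t - 1).
Proof.
  intros Ht. replace (1 - 1 / t ^ 2) with ((t - 1) * ((t + 1) / t ^ 2)) by (field; lra).
  assert (1 <= (t + 1) / t ^ 2 <= 2).
  { split; [apply Rmult_le_reg_r with (t ^ 2) | apply Rmult_le_reg_r with (t ^ 2)];
      try nra; field_simplify; nra. }
  nra.
Qed.

Lemma G_near_one_upper k t : 1 < t <= 3 / 2 ->
  G (S k) t - 1 <= cst (S k) / INR (S k) * sqrt 2 ^ k * Rpower (t - 1) ((INR (S k) + 1) / 2).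
Proof.
  intros Ht. destruct (increment_bounds (G_monotone_slope k) 1 t) as [_ Hup]; [lra|].
  rewrite G_one in Hup. rewrite Rpower_half_succ by lra.
  apply Rle_trans with (slope k t * (t - 1)); [lra|]. unfold slope.
  assert (Hsq : sqrt (1 - 1 / t ^ 2) <= sqrt 2 * sqrt (t - 1)).
  { rewrite <- sqrt_mult by lra. apply sqrt_le_1_alt.
    pose proof (one_minus_inv_sq_near_one t ltac:(lra)). lra. }
  replace (t - 1) with (sqrt (t - 1) ^ 2) at 1 by (rewrite pow2_sqrt; lra).
  replace (sqrt (t - 1) ^ S (S k)) with (sqrt (t - 1) ^ k * sqrt (t - 1) ^ 2) by (simpl; ring).
  rewrite !Rmult_assoc. apply Rmult_le_compat_l; [left; apply max_slope_pos|].
  rewrite <- !Rmult_assoc. apply Rmult_le_compat_r; [apply pow_le, sqrt_pos|].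
  rewrite <- Rpow_mult_distr. apply pow_incr. split; [apply sqrt_pos | auto].
Qed.

(* The matching lower bound, which feeds the Hoelder estimate (vi). *)
Lemma G_near_one_lower k t : 1 < t <= 2 ->
  cst (S k) / INR (S k) * Rpower (/ 2) ((INR (S k) + 1) / 2) * Rpower (t - 1) ((INR (S k) + 1) / 2)
  <= G (S k) t - 1.
Proof.
  intros Ht. set (m := (1 + t) / 2). set (y := m - 1).
  assert (Hy : 0 < y) by (unfold y, m; lra).
  destruct (increment_bounds (G_monotone_slope k) m t) as [Hlow _]; [unfold m; lra|].
  pose proof (at_least_one (G_monotone_slope k) m ltac:(unfold m; lra)).
  rewrite Rmult_assoc, Rpower_mult_distr by lra.
  replace (/ 2 * (t - 1)) with y by (unfold y, m; field).
  rewrite Rpower_half_succ by auto.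
  apply Rle_trans with (slope k m * (t - m)); [|lra]. unfold slope.
  assert (Hsq : sqrt y <= sqrt (1 - 1 / m ^ 2)).
  { apply sqrt_le_1_alt. pose proof (one_minus_inv_sq_near_one m ltac:(unfold m; lra)).
    unfold y. lra. }
  replace (t - m) with (sqrt y ^ 2) by (rewrite pow2_sqrt; unfold y, m; lra).
  replace (sqrt y ^ S (S k)) with (sqrt y ^ k * sqrt y ^ 2) by (simpl; ring).
  rewrite !Rmult_assoc. apply Rmult_le_compat_l; [left; apply max_slope_pos|].
  apply Rmult_le_compat_r; [apply pow_le, sqrt_pos|].
  apply pow_incr. split; [apply sqrt_pos | auto].
Qed.

Lemma g_derivative k t : 1 < t ->
  derivable_pt_lim (g (S k)) t
    (cst (S k) * / INR (S k) * Rpower (1 - 1 / t ^ 2) ((INR (S k) - 1) / 2)).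
Proof.
  intros Ht. apply is_derive_Reals.
  apply is_derive_ext_loc with (G (S k)).
  - exists (mkposreal (t - 1) ltac:(lra)). intros y Hy.
    change (Rabs (y - t) < t - 1) in Hy. apply Rabs_lt_between' in Hy.
    symmetry. apply g_eq_G. lra.
  - replace ((INR (S k) - 1) / 2) with (INR k / 2) by (rewrite S_INR; field).
    rewrite Rpower_half by (pose proof (inv_sq_lt_one t Ht); lra).
    apply G_derivative; auto.
Qed.

Theorem lemma2 (d : nat) (hd : (1 <= d)%nat) :
  (* g_d maps [1,oo) to [1,oo) *)
  (forall t, 1 <= t -> 1 <= g d t) /\
  (* (i) uniformly continuous, strictly increasing, convex on [1,oo) *)
  (forall eps, 0 < eps -> exists delta, 0 < delta /\
     forall s t, 1 <= s -> 1 <= t -> Rabs (s - t) < delta ->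
       Rabs (g d s - g d t) < eps) /\
  (forall s t, 1 <= s -> s < t -> g d s < g d t) /\
  (forall s t l, 1 <= s -> 1 <= t -> 0 <= l <= 1 ->
     g d (l * s + (1 - l) * t) <= l * g d s + (1 - l) * g d t) /\
  (* (ii) *)
  g d 1 = 1 /\
  (forall M, exists T, forall t, T <= t -> M < g d t) /\
  (* (iii) *)
  (forall t, 1 < t ->
     derivable_pt_lim (g d) t
       (cst d * / INR d * Rpower (1 - 1 / t ^ 2) ((INR d - 1) / 2))) /\
  (* (iv) *)
  (exists C delta, 0 < delta /\
     forall t, 1 < t < 1 + delta ->
       Rabs (g d t - 1) <= C * Rpower (t - 1) ((INR d + 1) / 2)) /\
  (* (v)-(vii) *)
  (exists ginv : R -> R,
     (forall t, 1 <= t -> 1 <= ginv t /\ g d (ginv t) = t /\ ginv (g d t) = t) /\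
     (forall h, 0 <= h -> is_lub (modc_set ginv h) (ginv (1 + h) - 1)) /\
     (exists C delta, 0 < delta /\
        forall h w, 0 < h < delta -> is_lub (modc_set ginv h) w ->
          Rabs w <= C * Rpower h (2 / (INR d + 1))) /\
     (exists C T, forall t, T <= t -> Rabs (ginv t) <= C * t)).
Proof.
  destruct d as [|k]; [lia|]. clear hd.
  pose proof (G_monotone_slope k) as HG.
  set (L := cst (S k) / INR (S k)). assert (HL : 0 < L) by apply max_slope_pos.
  set (p := (INR (S k) + 1) / 2). assert (Hp : 0 < p) by (unfold p; pose proof (pos_INR (S k)); lra).
  assert (Hg : forall t, 1 <= t -> g (S k) t = G (S k) t) by (intros; apply g_eq_G; lra).
  split; [|split; [|split; [|split; [|split; [|split; [|split; [|split]]]]]]].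
  - intros t Ht. rewrite Hg by auto. apply (at_least_one HG); auto.
  - intros eps Heps. destruct (uniformly_continuous HG L (slope_le_max k) eps Heps) as [delta [Hd Hu]].
    exists delta. split; auto. intros s t Hs Ht Hst. rewrite !Hg by auto. auto.
  - intros s t Hs Hst. rewrite !Hg by lra. apply (strictly_increasing HG). lra.
  - intros s t l Hs Ht Hl. rewrite !Hg by nra. apply (convex HG); auto.
  - rewrite Hg by lra. apply G_one.
  - intros M. destruct (unbounded HG M) as [T [HT Hu]]. exists T. intros t Ht.
    rewrite Hg by lra. auto.
  - apply g_derivative.
  - exists (L * sqrt 2 ^ k), (1 / 2). split; [lra|]. intros t Ht.
    pose proof (at_least_one HG t ltac:(lra)) as Hge1.
    rewrite Hg, Rabs_right by lra. apply G_near_one_upper. lra.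
  - exists (inverse_from_one (G (S k))). split; [|split; [|split]].
    + intros t Ht. destruct (inverse_spec HG t Ht) as [Hx Hfx].
      rewrite !Hg by lra. repeat split; auto. apply (inverse_left HG); auto.
    + apply (inverse_modulus HG).
    + replace (2 / (INR (S k) + 1)) with (/ p) by (unfold p; field; pose proof (pos_INR (S k)); lra).
      apply (inverse_holder HG (L * Rpower (/ 2) p) p); auto.
      * apply Rmult_lt_0_compat; [auto | apply exp_pos].
      * intros t Ht. apply G_near_one_lower; auto.
    + apply (inverse_linear HG).
Qed.
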